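(* Let $L$ be a finite loop and let $Z_2 = \{0,1\}$ be the Boolean near-ring with addition modulo $2$ and multiplication $a\cdot b = a$ for all $a,b\in Z_2$. Then the near loop ring $Z_2L$ has a subnear-ring $S \neq \{0\}$ which is a Boolean near-ring (i.e. $x\cdot x = x$ for all $x \in S$).
   Context: A loop is a set $L$ with a binary operation (written multiplicatively) and an identity $e$ such that for all $a,b \in L$ the equations $ax = b$ and $ya = b$ have unique solutions $x, y\in L$. The near loop ring $Z_2L$ consists of all formal sums $\sum_{m \in L} \alpha(m) m$ with $\alpha(m) \in Z_2$; addition is coefficientwise, and the product of $\alpha = \sum_{m \in \operatorname{supp}\alpha} \alpha(m) m$ and $\beta = \sum_{k \in \operatorname{supp}\beta} \beta(k) k$ (where $\operatorname{supp}$ denotes the set of loop elements with nonzero coefficient) is $\sum_{m \in \operatorname{supp}\alpha,\, k\in\operatorname{supp}\beta} (\alpha(m)\cdot\beta(k))\, mk$, like terms being collected by addition in $Z_2$; the element $1\cdot e$ is identified with $1$. A subnear-ring is a subset that is a subgroup under addition and closed under multiplication. *)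

From mathcomp Require Import all_boot.
Set Implicit Arguments. Unset Strict Implicit. Unset Printing Implicit Defensive.

Definition is_loop (T : Type) (op : T -> T -> T) (e : T) : Prop :=
  (forall a, op e a = a /\ op a e = a) /\
  (forall a b, exists! x, op a x = b) /\
  (forall a b, exists! y, op y a = b).

Definition z2add (a b : bool) : bool := a (+) b.
Definition z2mul (a b : bool) : bool := a.

Section NearLoopRing.
Variables (T : finType) (op : T -> T -> T).

(* Elements of the near loop ring Z_2 L: formal sums, i.e. coefficient
   functions L -> Z_2. *)
Definition nlr := {ffun T -> bool}.

Definition nlr0 : nlr := [ffun _ => false].

Definition nlr_add (a b : nlr) : nlr := [ffun m => z2add (a m) (b m)].

Definition nlr_opp (a : nlr) : nlr := [ffun m => a m].

(* product: sum over m in supp a, k in supp b of (a(m).b(k)) mk,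
   like terms collected by addition in Z_2 *)
Definition nlr_mul (a b : nlr) : nlr :=
  [ffun t => \big[z2add/false]_(m | a m) \big[z2add/false]_(k | b k)
               (z2mul (a m) (b k) && (op m k == t))].

Definition is_subnear_ring (S : {set nlr}) : Prop :=
  nlr0 \in S /\
  (forall x y, x \in S -> y \in S -> nlr_add x (nlr_opp y) \in S) /\
  (forall x y, x \in S -> y \in S -> nlr_mul x y \in S).

Definition is_boolean (S : {set nlr}) : Prop :=
  forall x, x \in S -> nlr_mul x x = x.

End NearLoopRing.

From mathcomp Require Import all_boot.
From HB Require Import structures.

Set Implicit Arguments.
Unset Strict Implicit.
Unset Printing Implicit Defensive.

(* The formal sum 1·e is idempotent because ee = e, and {0, 1·e} is closed
   under subtraction (x - x = 0 in characteristic 2) and under multiplication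
   (the empty sum 0 is absorbing on both sides), so it is a nonzero Boolean
   subnear-ring of Z_2 L. *)

HB.instance Definition _ := Monoid.isComLaw.Build bool false z2add addbA addbC addFb.

Section NearLoopRingFacts.
Variables (T : finType) (op : T -> T -> T).

Local Notation nlr0 := (nlr0 T).
Local Notation "x * y" := (nlr_mul op x y).
Local Notation "x - y" := (nlr_add x (nlr_opp y)).

Definition nlr_single (m : T) : nlr T := [ffun t => t == m].

Lemma nlr_single_neq0 m : nlr_single m != nlr0.
Proof. by apply/eqP => /(congr1 (fun f : nlr T => f m)); rewrite !ffunE eqxx. Qed.

Lemma nlr_mul_single m k : nlr_single m * nlr_single k = nlr_single (op m k).
Proof.
apply/ffunP => t; rewrite !ffunE.
rewrite (eq_bigl (pred1 m)) => [|i]; last by rewrite ffunE.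
rewrite big_pred1_eq (eq_bigl (pred1 k)) => [|i]; last by rewrite ffunE.
by rewrite big_pred1_eq /z2mul ffunE eqxx eq_sym.
Qed.

Lemma nlr_mul0r x : nlr0 * x = nlr0.
Proof. by apply/ffunP => t; rewrite !ffunE big_pred0 // => m; rewrite ffunE. Qed.

Lemma nlr_mulr0 x : x * nlr0 = nlr0.
Proof.
apply/ffunP => t; rewrite !ffunE big1 // => m _.
by rewrite big_pred0 // => k; rewrite ffunE.
Qed.

Lemma nlr_sub0r x : nlr0 - x = x.
Proof. by apply/ffunP => t; rewrite !ffunE. Qed.

Lemma nlr_subr0 x : x - nlr0 = x.
Proof. by apply/ffunP => t; rewrite !ffunE /z2add addbF. Qed.

Lemma nlr_subrr x : x - x = nlr0.
Proof. by apply/ffunP => t; rewrite !ffunE /z2add addbb. Qed.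

Section IdempotentPair.
Variable x : nlr T.
Hypothesis x_idem : x * x = x.

Lemma subnear_ring_pair0 : is_subnear_ring op [set nlr0; x].
Proof.
split; [by rewrite !inE eqxx | split] => y z; rewrite !inE => /orP[]/eqP-> /orP[]/eqP->;
  by rewrite ?nlr_sub0r ?nlr_subr0 ?nlr_subrr ?nlr_mul0r ?nlr_mulr0 ?x_idem !eqxx ?orbT.
Qed.

Lemma boolean_pair0 : is_boolean op [set nlr0; x].
Proof. by move=> y; rewrite !inE => /orP[]/eqP->; rewrite ?nlr_mul0r. Qed.

End IdempotentPair.

Lemma pair0_neq_set0 (x : nlr T) : x != nlr0 -> [set nlr0; x] != [set nlr0].
Proof.
move=> x_neq0; apply/negP => /eqP/setP/(_ x).
by rewrite !inE eqxx orbT (negbTE x_neq0).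
Qed.

End NearLoopRingFacts.

Theorem theorem3p3p4 (T : finType) (op : T -> T -> T) (e : T) :
  is_loop op e ->
  exists S : {set nlr T},
    is_subnear_ring op S /\ S != [set nlr0 T] /\ is_boolean op S.
Proof.
move=> [id_e _].
have e_idem : nlr_mul op (nlr_single e) (nlr_single e) = nlr_single e.
  by rewrite nlr_mul_single; case: (id_e e) => ->.
exists [set nlr0 T; nlr_single e]; split; last split.
- exact: subnear_ring_pair0.
- exact/pair0_neq_set0/nlr_single_neq0.
- exact: boolean_pair0.
Qed.
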